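(* Let $G$ be a finite soluble group whose order is divisible by at least four distinct primes. Then the diameter of $\Gamma(G)$ is at most $3$.
   Context: For a finite group $G$, let $\widetilde{\Gamma}(G)$ be the graph with vertex set $G$ in which two distinct elements $x,y$ are adjacent if and only if $|\langle x,y\rangle|$ is divisible by at least three distinct primes. $\Gamma(G)$ is the subgraph of $\widetilde{\Gamma}(G)$ obtained by deleting its isolated vertices. *)

From mathcomp Require Import all_boot all_fingroup all_solvable.
Set Implicit Arguments. Unset Strict Implicit. Unset Printing Implicit Defensive.
Local Open Scope group_scope.

Definition prime_graph_adj (gT : finGroupType) (x y : gT) : bool :=
  (x != y) && (3 <= size (primes #|<<[set x; y]>>|))%N.

Definition Gamma_vertex (gT : finGroupType) (G : {set gT}) (x : gT) : bool :=
  (x \in G) && [exists z in G, prime_graph_adj x z].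

(* Distance between x and y in \widetilde{\Gamma}(G) (equivalently in Gamma(G),
   since intermediate vertices of a path are non-isolated) is at most n. *)
Definition Gamma_dist_le (gT : finGroupType) (G : {set gT}) (n : nat) (x y : gT) : Prop :=
  exists p : seq gT, [/\ all (mem G) p, path (@prime_graph_adj gT) x p,
                          last x p = y & (size p <= n)%N].

Definition Gamma_diam_le (gT : finGroupType) (G : {set gT}) (n : nat) : Prop :=
  forall x y, Gamma_vertex G x -> Gamma_vertex G y -> Gamma_dist_le G n x y.

From mathcomp Require Import all_boot all_fingroup all_solvable ssralg finalg.
Set Implicit Arguments. Unset Strict Implicit. Unset Printing Implicit Defensive.
Import GRing.Theory FiniteModule.
Local Open Scope group_scope.

(* The key input is Lucido's theorem: in a soluble group, among any three
   primes dividing |G| two divide the order of a single element.  In a Hall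
   subgroup for the three primes take a minimal normal s-subgroup N, a minimal
   normal w-subgroup M of a Hall subgroup for the other two primes, and an
   element y of the third prime order.  If no element had order divisible by
   two of the primes, M<y> would act on N as a Frobenius group with
   C_N(M) = C_N(y) = 1, and double counting an orbit sum shows that |M|
   annihilates N, so N = 1.
   For the diameter, an element whose order has three prime divisors is
   adjacent to everything.  Otherwise pick primes p | o(x) and q | o(y): an
   element whose order is divisible by two primes other than p and q is adjacent
   to both x and y.  Lucido's theorem, applied to primes avoiding p and q (and
   to {q, r, t} and {p, r, t} when p <> q), yields either such an element or
   elements g1, g2 giving a path x - g1 - g2 - y. *)

Lemma class_eq_rcoset (gT : finGroupType) (M : {group gT}) (d : gT) :
  d \in 'N(M) -> 'C_M[d] = 1 -> d ^: M = M :* d.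
Proof.
move=> nMd cMd; apply/eqP; rewrite eqEcard card_rcoset -index_cent1 cMd indexg1.
rewrite leqnn andbT; apply/subsetP => _ /imsetP[m Mm ->]; apply/rcosetP.
exists (m^-1 * m ^ d^-1); first by rewrite groupM ?groupV // memJ_norm ?groupV.
by rewrite conjgE [m ^ _]conjgE invgK !mulgA mulgKV.
Qed.

Section FrobeniusActionOnAbelian.

Variables (gT : finGroupType) (N : {group gT}) (abN : abelian N).
Implicit Types (M X Y : {group gT}) (u : fmod_of abN).

Lemma actr_sum_eq0 X u :
  X \subset 'N(N) -> 'C_N(X) = 1 -> (\sum_(x in X) u ^@ x = 0)%R.
Proof.
move=> nNX cNX; set S := (\sum_(x in X) u ^@ x)%R.
have fixS z : z \in X -> (S ^@ z = S)%R.
  move=> Xz; rewrite /S actr_sum [RHS](reindex_inj (mulIg z)) /=.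
  apply: eq_big => [x | x Xx]; first by rewrite groupMr.
  by rewrite actrM ?(subsetP nNX) // groupM.
have: val S \in 'C_N(X).
  rewrite inE fmodP /=; apply/centP => z Xz.
  by rewrite /commute conjgC -fmvalJ ?(subsetP nNX) ?fixS.
by rewrite cNX inE => /eqP S1; apply: val_inj.
Qed.

Lemma actr_sum_class_eq0 M d u :
    M \subset 'N(N) -> d \in 'N(N) -> d \in 'N(M) -> 'C_M[d] = 1 ->
  'C_N(M) = 1 -> (\sum_(m in M) u ^@ (d ^ m) = 0)%R.
Proof.
move=> nNM nNd nMd cMd cNM.
have defdM := class_eq_rcoset nMd cMd.
have injJ : {in M &, injective (conjg d)}.
  by apply/imset_injP; rewrite -[imset _ _]/(d ^: M) defdM card_rcoset.
rewrite -(big_imset _ injJ) -[imset _ _]/(d ^: M) defdM -rcosetE /rcoset.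
rewrite big_imset /=; last exact: in2W (mulIg d).
rewrite (eq_bigr (fun m => (u ^@ m) ^@ d)%R) => [|m Mm]; last first.
  by rewrite actrM //; apply: (subsetP nNM).
by rewrite -actr_sum actr_sum_eq0 // act0r.
Qed.

Lemma Frobenius_mulrn_card_eq0 M Y u :
    M \subset 'N(N) -> Y \subset 'N(N) -> Y \subset 'N(M) -> semiregular M Y ->
  'C_N(M) = 1 -> 'C_N(Y) = 1 -> (u *+ #|M| = 0)%R.
Proof.
move=> nNM nNY nMY regMY cNM cNY.
(* For fixed [m] the inner sum is an orbit sum of [Y], for fixed [d != 1] the
   conjugates [d ^ m] run over the coset [M :* d]; only [d = 1] survives. *)
have sum0 : (\sum_(m in M) \sum_(d in Y) u ^@ (d ^ m) = 0)%R.
  apply: big1 => m Mm; have nNm := subsetP nNM m Mm.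
  rewrite (eq_bigr (fun d => (u ^@ m^-1 ^@ d) ^@ m)%R) => [|d Yd]; last first.
    by rewrite conjgE !actrM ?groupV ?groupM //; apply: (subsetP nNY).
  by rewrite -actr_sum actr_sum_eq0 // act0r.
have sum_nt0 : (\sum_(d in Y | d != 1%g) \sum_(m in M) u ^@ (d ^ m) = 0)%R.
  apply: big1 => d /andP[Yd ntd]; apply: actr_sum_class_eq0 => //.
  - exact: (subsetP nNY).
  - exact: (subsetP nMY).
  - by apply: regMY; rewrite !inE ntd.
rewrite exchange_big (bigD1 1%g) //= sum_nt0 addr0 in sum0.
by rewrite -sum0 -sumr_const; apply: eq_bigr => m _; rewrite conj1g actr1.
Qed.

Lemma Frobenius_action_trivial M Y :
    M \subset 'N(N) -> Y \subset 'N(N) -> Y \subset 'N(M) -> semiregular M Y ->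
  'C_N(M) = 1 -> 'C_N(Y) = 1 -> coprime #|M| #|N| -> N :=: 1.
Proof.
move=> nNM nNY nMY regMY cNM cNY coMN; apply/trivgP/subsetP => x Nx; rewrite inE.
have /(congr1 val) := Frobenius_mulrn_card_eq0 (fmod abN x) nNM nNY nMY regMY cNM cNY.
rewrite fmvalZ fmodK // fmval0 => xM1.
have : #[x] %| gcdn #|M| #|N| by rewrite dvdn_gcd order_dvdn xM1 eqxx order_dvdG.
by rewrite (eqP coMN) dvdn1 order_eq1.
Qed.

End FrobeniusActionOnAbelian.

Lemma semiregular_cycle_prime (gT : finGroupType) (M : {group gT}) (y : gT) :
  prime #[y] -> 'C_M(<[y]>) = 1 -> semiregular M <[y]>.
Proof.
by move=> pr_y cMy d Yd; rewrite -cent_cycle -(nt_gen_prime pr_y Yd).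
Qed.

Lemma pHall_primes (gT : finGroupType) (pi : nat_pred) (G H : {group gT}) p :
  pi.-Hall(G) H -> p \in pi -> p \in primes #|G| -> p \in primes #|H|.
Proof.
move=> hallH pi_p pG; rewrite (card_Hall hallH).
by have := pi_of_part pi (cardG_gt0 G) p; rewrite !inE /= pi_p pG => ->.
Qed.

Lemma p_elt_prime_dvd_order (gT : finGroupType) (p : nat) (a : gT) :
  p.-elt a -> a != 1 -> p %| #[a].
Proof. by move=> pa nta; have [] := pgroup_pdiv pa; rewrite ?cycle_eq1. Qed.

Lemma commute_order_dvd_mulg (gT : finGroupType) (a b : gT) (p q : nat) :
    p != q -> p.-elt a -> q.-elt b -> a != 1 -> b != 1 -> commute a b ->
  (p %| #[a * b]) && (q %| #[a * b]).
Proof.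
move=> neq_pq pa qb nta ntb cab.
have co_ab : coprime #[a] #[b] by apply: pnat_coprime pa (pi_pnat qb _); rewrite !inE eq_sym.
by rewrite orderM // dvdn_mulr ?dvdn_mull ?p_elt_prime_dvd_order.
Qed.

Section TwoPrimesElement.

Variable gT : finGroupType.
Implicit Types (G H N A B : {group gT}) (pi : seq nat).

(* [pi] contains an edge of the Gruenberg-Kegel prime graph of [G]. *)
Definition two_primes_elt (G : {set gT}) pi :=
  exists g l1 l2,
    [/\ g \in G, l1 \in pi, l2 \in pi, l1 != l2 & (l1 %| #[g]) && (l2 %| #[g])].

Lemma two_primes_eltS H G pi :
  H \subset G -> two_primes_elt H pi -> two_primes_elt G pi.
Proof.
by move=> sHG [g [l1 [l2 [Hg *]]]]; exists g, l1, l2; split=> //; apply: (subsetP sHG).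
Qed.

Lemma two_primes_elt_cons (G : {set gT}) (q : nat) pi :
    two_primes_elt G (q :: pi) ->
  two_primes_elt G pi \/ exists g a, [/\ g \in G, a \in pi, q %| #[g] & a %| #[g]].
Proof.
move=> [g [l1 [l2 [Gg]]]]; rewrite !inE.
case/predU1P=> [-> | l1_pi] /predU1P[-> | l2_pi] //; first by rewrite eqxx.
- by move=> _ /andP[q_g l2_g]; right; exists g, l2.
- by move=> _ /andP[l1_g q_g]; right; exists g, l1.
- by move=> l12 l_g; left; exists g, l1, l2.
Qed.

Lemma two_primes_elt_cent G A B pi p q :
    A \subset G -> B \subset G -> p \in pi -> q \in pi -> p != q ->
    p.-group A -> q.-group B -> B :!=: 1 -> 'C_A(B) != 1 ->
  two_primes_elt G pi.
Proof.
move=> sAG sBG pi_p pi_q neq_pq pA qB ntB /trivgPn[a /setIP[Aa cBa] nta].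
have [b Bb ntb] := trivgPn _ ntB.
exists (a * b), p, q; split=> //; first exact: groupM (subsetP sAG a Aa) (subsetP sBG b Bb).
apply: commute_order_dvd_mulg => //; [exact: mem_p_elt pA Aa | exact: mem_p_elt qB Bb |].
exact: (centP cBa).
Qed.

(* A nontrivial centralizer among [N], a minimal normal subgroup [M] of a Hall
   {t, u}-subgroup and an element [y] of the other prime order yields the
   element; otherwise [M<y>] acts on [N] as in [Frobenius_action_trivial]. *)
Lemma two_primes_elt_abelian_normal H N pi (s t u : nat) :
    solvable H -> N \subset H -> H \subset 'N(N) -> abelian N -> s.-group N -> N :!=: 1 ->
    s \in pi -> t \in pi -> u \in pi -> s != t -> s != u -> t != u ->
    t \in primes #|H| -> u \in primes #|H| ->
  two_primes_elt H pi.
Proof.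
move=> solH sNH nNH abN sN ntN pi_s pi_t pi_u st su tu tH uH.
have [K hallK _] := Hall_exists_subJ (pred2 t u) solH.
have sKH := pHall_sub hallK; have nNK := subset_trans sKH nNH.
have tK : t \in primes #|K| by apply: pHall_primes hallK _ tH; rewrite !inE eqxx.
have uK : u \in primes #|K| by apply: pHall_primes hallK _ uH; rewrite !inE eqxx orbT.
have ntK : K :!=: 1 by apply: contraTneq tK => ->; rewrite cards1.
have [M [sMK nsMK ntM /is_abelemP[w pr_w abelM]]] :=
  solvable_norm_abelem (solvableS sKH solH) (normal_refl K) ntK.
have wM := abelem_pgroup abelM; have sMH := subset_trans sMK sKH.
have /pred2P w_tu : w \in pred2 t u.
  apply: (pgroupP (pHall_pgroup hallK)) pr_w _; apply: dvdn_trans (cardSg sMK).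
  by have [] := pgroup_pdiv wM ntM.
have [pi_w sw] : w \in pi /\ s != w by case: w_tu => ->.
have [v [vK wv pi_v sv]] : exists v, [/\ v \in primes #|K|, w != v, v \in pi & s != v].
  by case: w_tu => ->; [exists u | exists t]; rewrite // eq_sym.
move: vK; rewrite mem_primes => /and3P[pr_v _ vK]; have [y Ky oy] := Cauchy pr_v vK.
have vY : v.-group <[y]> by rewrite /pgroup -/#[y] oy pnat_id.
have ntY : <[y]> :!=: 1 by rewrite cycle_eq1 -order_gt1 oy prime_gt1.
have sYH : <[y]> \subset H by rewrite cycle_subG (subsetP sKH).
have [cNM | ] := eqVneq 'C_N(M) 1;
  last exact: two_primes_elt_cent sNH sMH pi_s pi_w sw sN wM ntM.
have [cNY | ] := eqVneq 'C_N(<[y]>) 1;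
  last exact: two_primes_elt_cent sNH sYH pi_s pi_v sv sN vY ntY.
have [cMY | ] := eqVneq 'C_M(<[y]>) 1;
  last exact: two_primes_elt_cent sMH sYH pi_w pi_v wv wM vY ntY.
case/eqP: ntN; apply: (Frobenius_action_trivial (Y := <[y]>%G) abN _ _ _ _ cNM cNY).
- exact: subset_trans sMK nNK.
- by rewrite cycle_subG (subsetP nNK).
- by rewrite cycle_subG (subsetP (normal_norm nsMK)).
- by apply: semiregular_cycle_prime cMY; rewrite oy.
- by apply: pnat_coprime wM (pi_pnat sN _); rewrite !inE.
Qed.

End TwoPrimesElement.

Theorem solvable_two_primes_elt (gT : finGroupType) (G : {group gT}) (pi : seq nat) :
    solvable G -> uniq pi -> 2 < size pi -> {subset pi <= primes #|G|} ->
  two_primes_elt G pi.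
Proof.
case: pi => [|a [|b [|c pi]]] // solG uniq_pi _ pi_G.
have [/andP[ab ac] bc] : (a != b) && (a != c) /\ b != c.
  by move: uniq_pi; rewrite /= !inE !negb_or => /and3P[/and3P[-> -> _] /andP[-> _] _].
have [H hallH _] := Hall_exists_subJ (pred3 a b c) solG.
have sHG := pHall_sub hallH; apply: (two_primes_eltS sHG).
have abcH z : z \in pred3 a b c -> z \in primes #|H|.
  move=> abc_z; apply: (pHall_primes hallH abc_z); apply: pi_G.
  by move: abc_z; rewrite !inE => /or3P[] ->; rewrite ?orbT.
have aH : a \in primes #|H| by rewrite abcH ?inE ?eqxx.
have ntH : H :!=: 1 by apply: contraTneq aH => ->; rewrite cards1.
have solH := solvableS sHG solG.
have [N [sNH nsNH ntN /is_abelemP[s pr_s abelN]]] :=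
  solvable_norm_abelem solH (normal_refl H) ntH.
have two_primes_N := two_primes_elt_abelian_normal solH sNH (normal_norm nsNH)
  (abelem_abelian abelN) (abelem_pgroup abelN) ntN.
have : s \in pred3 a b c.
  apply: (pgroupP (pHall_pgroup hallH)) pr_s _; apply: dvdn_trans (cardSg sNH).
  by have [] := pgroup_pdiv (abelem_pgroup abelN) ntN.
rewrite !inE => /or3P[] /eqP s_abc; subst s.
- by apply: (two_primes_N _ b c); rewrite ?abcH ?inE ?eqxx ?orbT.
- by apply: (two_primes_N _ a c); rewrite ?abcH ?inE ?eqxx ?orbT // eq_sym.
- by apply: (two_primes_N _ a b); rewrite ?abcH ?inE ?eqxx ?orbT // eq_sym.
Qed.

Lemma size_filter_notin (T : eqType) (s L : seq T) :
  uniq s -> size s <= size [seq z <- s | z \notin L] + size L.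
Proof.
move=> uniq_s; rewrite -(count_predC (mem L) s) size_filter addnC leq_add2l.
rewrite -size_filter; apply: uniq_leq_size (filter_uniq _ uniq_s) _ => z.
by rewrite mem_filter => /andP[].
Qed.

Lemma subset_primes_notin (pi : seq nat) n p q z :
    {subset pi <= primes n} -> p \notin pi -> q \notin pi -> z \in pi ->
  [&& prime z, z != p & z != q].
Proof.
move=> pi_n p_pi q_pi z_pi; rewrite (memPn p_pi z z_pi) (memPn q_pi z z_pi) !andbT.
by move/pi_n: z_pi; rewrite mem_primes => /andP[].
Qed.

Lemma size_primes_dvd m n : m %| n -> 0 < n -> size (primes m) <= size (primes n).
Proof.
move=> mn n_gt0; apply: uniq_leq_size (primes_uniq m) _ => z.
by rewrite !mem_primes n_gt0 => /and3P[-> _ /dvdn_trans->].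
Qed.

Lemma size_primes_gt2 n a b c :
    0 < n -> prime a -> prime b -> prime c -> a != b -> a != c -> b != c ->
  a %| n -> b %| n -> c %| n -> 2 < size (primes n).
Proof.
move=> n_gt0 pr_a pr_b pr_c ab ac bc an bn cn.
apply: (uniq_leq_size (s1 := [:: a; b; c])); first by rewrite /= !inE negb_or ab ac bc.
by move=> z; rewrite !inE mem_primes n_gt0 => /or3P[] /eqP ->; apply/andP.
Qed.

Section PrimeGraph.

Variable gT : finGroupType.
Implicit Types (G : {group gT}) (g x y z : gT).

Lemma prime_graph_adjC x y : prime_graph_adj x y = prime_graph_adj y x.
Proof. by rewrite /prime_graph_adj eq_sym setUC. Qed.

Lemma lcm_order_dvd_card_gen x y : lcmn #[x] #[y] %| #|<<[set x; y]>>|.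
Proof.
by rewrite dvdn_lcm !cardSg // cycle_subG mem_gen // !inE eqxx ?orbT.
Qed.

Lemma prime_graph_adj_lcm x y :
  x != y -> 2 < size (primes (lcmn #[x] #[y])) -> prime_graph_adj x y.
Proof.
move=> nxy lcm3; rewrite /prime_graph_adj nxy (leq_trans lcm3) //.
by rewrite size_primes_dvd ?lcm_order_dvd_card_gen.
Qed.

Lemma prime_graph_adj_universal g x :
  2 < size (primes #[g]) -> x != g -> prime_graph_adj g x.
Proof.
move=> g3 nxg; apply: prime_graph_adj_lcm; first by rewrite eq_sym.
by rewrite (leq_trans g3) // size_primes_dvd ?dvdn_lcml // lcmn_gt0 !order_gt0.
Qed.

Lemma prime_graph_adj1 z : prime_graph_adj 1 z -> 2 < size (primes #[z]).
Proof.
rewrite /prime_graph_adj; have -> : <<[set 1; z]>> = <[z]>.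
  apply/eqP; rewrite eqEsubset gen_subG subUset !sub1set group1 cycle_id.
  by rewrite genS // subsetUr.
by case/andP.
Qed.

Lemma Gamma_dist_le_refl G n x : Gamma_dist_le G n x x.
Proof. by exists [::]. Qed.

Lemma Gamma_dist_le_adj G x y : y \in G -> prime_graph_adj x y -> Gamma_dist_le G 1 x y.
Proof. by move=> Gy xy; exists [:: y]; rewrite /= Gy xy. Qed.

Lemma Gamma_dist_le_trans G m n x y z :
  Gamma_dist_le G m x y -> Gamma_dist_le G n y z -> Gamma_dist_le G (m + n) x z.
Proof.
move=> [p1 [Gp1 xp1 <- p1m]] [p2 [Gp2 yp2 <- p2n]]; exists (p1 ++ p2).
by rewrite all_cat cat_path last_cat Gp1 Gp2 xp1 yp2 size_cat leq_add.
Qed.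

Lemma Gamma_dist_leW G m n x y :
  m <= n -> Gamma_dist_le G m x y -> Gamma_dist_le G n x y.
Proof. by move=> mn [p [Gp xp <- pm]]; exists p; split=> //; apply: leq_trans mn. Qed.

Lemma Gamma_dist_le_universal G g x y :
  g \in G -> 2 < size (primes #[g]) -> y \in G -> Gamma_dist_le G 2 x y.
Proof.
move=> Gg g3 Gy; apply: (@Gamma_dist_le_trans _ 1 1 _ g).
  have [-> | nxg] := eqVneq x g; first exact: Gamma_dist_le_refl.
  by apply: Gamma_dist_le_adj; rewrite // prime_graph_adjC prime_graph_adj_universal.
have [-> | nyg] := eqVneq y g; first exact: Gamma_dist_le_refl.
exact: Gamma_dist_le_adj (prime_graph_adj_universal g3 nyg).
Qed.

End PrimeGraph.

Section SmallOrders.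

Variables (gT : finGroupType) (G : {group gT}).
Hypotheses (solG : solvable G) (primesG : 3 < size (primes #|G|)).
Hypothesis smallG : forall g, g \in G -> size (primes #[g]) <= 2.

Lemma Gamma_vertex_neq1 x : Gamma_vertex G x -> x != 1.
Proof.
case/andP=> _ /existsP[z /andP[Gz]]; apply: contraTneq => ->.
by apply/negP => /prime_graph_adj1; rewrite ltnNge smallG.
Qed.

Lemma prime_graph_adj_primes u v a b c :
    u \in G -> prime a -> prime b -> prime c -> a != b -> a != c -> b != c ->
    (a %| #[u]) || (a %| #[v]) -> (b %| #[u]) || (b %| #[v]) ->
    (c %| #[u]) || (c %| #[v]) ->
  prime_graph_adj u v.
Proof.
move=> Gu pr_a pr_b pr_c ab ac bc a_uv b_uv c_uv.
have dvd_lcm l : (l %| #[u]) || (l %| #[v]) -> l %| lcmn #[u] #[v].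
  by case/orP=> /dvdn_trans; apply; rewrite ?dvdn_lcml ?dvdn_lcmr.
have lcm3 : 2 < size (primes (lcmn #[u] #[v])).
  by apply: (size_primes_gt2 _ pr_a pr_b pr_c ab ac bc); rewrite ?lcmn_gt0 ?order_gt0 ?dvd_lcm.
(* [u != v] since [#[u]] alone has at most two prime divisors. *)
apply: (prime_graph_adj_lcm _ lcm3); apply: contraTneq lcm3 => <-.
by rewrite (lcmn_idPl (dvdnn _)) -leqNgt smallG.
Qed.

Lemma Gamma_dist_le_two_primes_elt x y p q pi :
    x \in G -> y \in G -> prime p -> prime q -> p \notin pi -> q \notin pi ->
    {subset pi <= primes #|G|} -> p %| #[x] -> q %| #[y] -> two_primes_elt G pi ->
  Gamma_dist_le G 2 x y.
Proof.
move=> Gx Gy pr_p pr_q p_pi q_pi piG p_x q_y [g [r [t [Gg r_pi t_pi rt /andP[r_g t_g]]]]].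
have /and3P[pr_r rp rq] := subset_primes_notin piG p_pi q_pi r_pi.
have /and3P[pr_t tp tq] := subset_primes_notin piG p_pi q_pi t_pi.
apply: (@Gamma_dist_le_trans _ _ 1 1 _ g); apply: Gamma_dist_le_adj => //.
  by apply: (prime_graph_adj_primes Gx pr_p pr_r pr_t); rewrite ?p_x ?r_g ?t_g ?orbT // eq_sym.
by apply: (prime_graph_adj_primes Gg pr_r pr_t pr_q); rewrite ?r_g ?t_g ?q_y ?orbT.
Qed.

Lemma Gamma_dist_le3_chain x y g1 g2 p q (pi : seq nat) a1 a2 :
    x \in G -> g1 \in G -> g2 \in G -> y \in G -> prime p -> prime q -> p != q ->
    p \notin pi -> q \notin pi -> {subset pi <= primes #|G|} -> a1 \in pi -> a2 \in pi ->
    p %| #[x] -> q %| #[g1] -> a1 %| #[g1] -> p %| #[g2] -> a2 %| #[g2] -> q %| #[y] ->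
  Gamma_dist_le G 3 x y.
Proof.
move=> Gx Gg1 Gg2 Gy pr_p pr_q pq p_pi q_pi piG a1_pi a2_pi.
move=> p_x q_g1 a1_g1 p_g2 a2_g2 q_y.
have /and3P[pr_a1 a1p a1q] := subset_primes_notin piG p_pi q_pi a1_pi.
have /and3P[pr_a2 a2p a2q] := subset_primes_notin piG p_pi q_pi a2_pi.
apply: (@Gamma_dist_le_trans _ _ 1 2 _ g1); first apply: Gamma_dist_le_adj => //.
  apply: (prime_graph_adj_primes Gx pr_p pr_q pr_a1);
    by rewrite ?p_x ?q_g1 ?a1_g1 ?orbT // eq_sym.
apply: (@Gamma_dist_le_trans _ _ 1 1 _ g2); apply: Gamma_dist_le_adj => //.
  apply: (prime_graph_adj_primes Gg1 pr_q pr_a1 pr_p);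
    by rewrite ?q_g1 ?a1_g1 ?p_g2 ?orbT // eq_sym.
by apply: (prime_graph_adj_primes Gg2 pr_p pr_a2 pr_q); rewrite ?p_g2 ?a2_g2 ?q_y ?orbT // eq_sym.
Qed.

Lemma Gamma_dist_le_common_prime x y p :
  x \in G -> y \in G -> prime p -> p %| #[x] -> p %| #[y] -> Gamma_dist_le G 3 x y.
Proof.
move=> Gx Gy pr_p p_x p_y; set s := [seq z <- primes #|G| | z \notin [:: p]].
have sG : {subset s <= primes #|G|} := mem_subseq (filter_subseq _ _).
have p_s : p \notin s by rewrite mem_filter inE eqxx.
apply: Gamma_dist_leW (leqnSn 2)
  (Gamma_dist_le_two_primes_elt Gx Gy pr_p pr_p p_s p_s sG p_x p_y _).
apply: solvable_two_primes_elt; rewrite ?filter_uniq ?primes_uniq //.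
by rewrite -ltnS -(addn1 (size s)) (leq_trans primesG) ?size_filter_notin ?primes_uniq.
Qed.

Lemma Gamma_dist_le_distinct_primes x y p q :
    x \in G -> y \in G -> prime p -> prime q -> p != q -> p %| #[x] -> q %| #[y] ->
  Gamma_dist_le G 3 x y.
Proof.
move=> Gx Gy pr_p pr_q pq p_x q_y; set s := [seq z <- primes #|G| | z \notin [:: p; q]].
have sG : {subset s <= primes #|G|} := mem_subseq (filter_subseq _ _).
have [p_s q_s] : p \notin s /\ q \notin s by rewrite !mem_filter !inE !eqxx ?orbT.
have s_gt1 : 1 < size s.
  by rewrite -(ltn_add2r 2) (leq_trans primesG) ?size_filter_notin ?primes_uniq.
have two_primes_cons l : l \in primes #|G| -> l \notin s -> two_primes_elt G (l :: s).
  move=> lG l_s; apply: solvable_two_primes_elt; rewrite /= ?l_s ?filter_uniq ?primes_uniq //.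
  by move=> z; rewrite inE => /predU1P[-> | /sG].
have prime_dvd_G l z : l %| #[z] -> prime l -> z \in G -> l \in primes #|G|.
  by move=> l_z pr_l Gz; rewrite mem_primes pr_l cardG_gt0 (dvdn_trans l_z (order_dvdG Gz)).
have dist2 := Gamma_dist_le_two_primes_elt Gx Gy pr_p pr_q p_s q_s sG p_x q_y.
have [pair | [g1 [a1 [Gg1 a1s q_g1 a1_g1]]]] :=
  two_primes_elt_cons (two_primes_cons q (prime_dvd_G q y q_y pr_q Gy) q_s).
  exact: Gamma_dist_leW (leqnSn 2) (dist2 pair).
have [pair | [g2 [a2 [Gg2 a2s p_g2 a2_g2]]]] :=
  two_primes_elt_cons (two_primes_cons p (prime_dvd_G p x p_x pr_p Gx) p_s).
  exact: Gamma_dist_leW (leqnSn 2) (dist2 pair).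
exact: (Gamma_dist_le3_chain Gx Gg1 Gg2 Gy pr_p pr_q pq p_s q_s sG a1s a2s
  p_x q_g1 a1_g1 p_g2 a2_g2 q_y).
Qed.

End SmallOrders.

Theorem lemma3p1 (gT : finGroupType) (G : {group gT}) :
  solvable G -> (4 <= size (primes #|G|))%N -> Gamma_diam_le G 3.
Proof.
move=> solG primesG x y vx vy; have [/andP[Gx _] /andP[Gy _]] := (vx, vy).
have [/existsP[g /andP[Gg g3]] | /existsPn small] := boolP [exists g in G, 2 < size (primes #[g])].
  exact: Gamma_dist_leW _ (Gamma_dist_le_universal x Gg g3 Gy).
have smallG g : g \in G -> size (primes #[g]) <= 2.
  by move=> Gg; move: (small g); rewrite Gg -leqNgt.
have pdiv_order z : Gamma_vertex G z -> prime (pdiv #[z]) /\ pdiv #[z] %| #[z].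
  by move/(Gamma_vertex_neq1 smallG); rewrite -order_gt1 => z_gt1; rewrite pdiv_prime ?pdiv_dvd.
have [[pr_p p_x] [pr_q q_y]] := (pdiv_order x vx, pdiv_order y vy).
have [pxy | pq] := eqVneq (pdiv #[x]) (pdiv #[y]).
  by rewrite pxy in p_x; apply: Gamma_dist_le_common_prime Gx Gy pr_q p_x q_y.
exact: Gamma_dist_le_distinct_primes Gx Gy pr_p pr_q pq p_x q_y.
Qed.
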